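(* In the construction described in the context, for every $k\in\{1,\dots,t-1\}$ and every set $\mathcal{A}\subseteq\{1,\dots,t-1\}$ of indices with $|\mathcal{A}|=k$, there exist at least $k$ distinct edges of $F\cap T$ each of which crosses at least one of the complete cuts $C_G(X_i)$, $i\in\mathcal{A}$.
   Context: Setting: $G=(V,E)$ is a connected finite undirected graph (parallel edges allowed), $w:E\to\mathbb{R}_{\ge0}$ edge weights, $c:E\to\mathbb{R}_{>0}$ edge costs, $n=|V|$. For $S\subseteq V$, $C_G(S)=\{e\in E:|e\cap S|=1\}$ (complete cut; its edges cross it) and $C_G(S,W)=\{e\in C_G(S):w(e)<W\}$ (partial cut). $F\subseteq E$ is a set with $G'=G\setminus F=(V,E\setminus F)$ connected; $B=c(F)$ and $\Delta=\mathrm{MST}(G')-\mathrm{MST}(G)$ (MST weights w.r.t. $w$). Construction: let $T$ be a minimum spanning tree of $G$ and $T\cap F=\{e_1,\dots,e_{t-1}\}$, with $t\ge2$. Removing these edges splits $T$ into components with vertex sets $A_1,\dots,A_t$ (a partition of $V$). Let $G'_{cc}$ be the multigraph with vertex set $V_{cc}=\{A_1,\dots,A_t\}$ having, for every edge $\{u,v\}\in E\setminus F$ with $u\in A_i$, $v\in A_j$, an edge between $A_i$ and $A_j$ of weight $w(\{u,v\})$ (identified with the original edge). Let $T'_{cc}$ be a minimum spanning tree of $G'_{cc}$, with edges $e'_1,\dots,e'_{t-1}$ indexed so that $w(e'_1)\le\dots\le w(e'_{t-1})$ (ties broken arbitrarily). For each $i$, deleting $e'_i,e'_{i+1},\dots,e'_{t-1}$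 from $T'_{cc}$ leaves a forest in which $e'_i$ joins two components $L_i,R_i\subseteq V_{cc}$. Counters $k(A)=0$ for all $A\in V_{cc}$ initially, and $k(S)=\max_{A\in S}k(A)$. For $i=1,\dots,t-1$ in order: set $X_i=L_i$ if $k(L_i)\le k(R_i)$, else $X_i=R_i$; then increase $k(A)$ by $1$ for every $A\in X_i$. Identifying a set of vertices of $G'_{cc}$ with the union of the corresponding vertex sets in $V$, define $C_i=C_G(X_i,w(e'_i))$. *)

From mathcomp Require Import all_boot all_order all_algebra.
Set Implicit Arguments. Unset Strict Implicit. Unset Printing Implicit Defensive.
Import Order.TTheory GRing.Theory Num.Theory.

(* A finite multigraph is given by a vertex finType W, a vertex set Vs, an
   edge finType E with endpoint maps eu ev : E -> W; subgraphs are edge sets. *)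

Definition gadj (W E : finType) (eu ev : E -> W) (S : {set E}) : rel W :=
  fun x y => [exists e in S, ((eu e == x) && (ev e == y))
                          || ((eu e == y) && (ev e == x))].

Definition gconnected (W E : finType) (Vs : {set W}) (eu ev : E -> W)
  (S : {set E}) : Prop :=
  forall x y, x \in Vs -> y \in Vs -> connect (gadj eu ev S) x y.

Definition spanning_tree (W E : finType) (Vs : {set W}) (eu ev : E -> W)
  (Es S : {set E}) : Prop :=
  [/\ S \subset Es, gconnected Vs eu ev S &
      forall e, e \in S -> ~ gconnected Vs eu ev (S :\ e)].

Definition is_mst (R : numDomainType) (W E : finType) (Vs : {set W})
  (eu ev : E -> W) (Es : {set E}) (w : E -> R) (S : {set E}) : Prop :=
  spanning_tree Vs eu ev Es S /\
  forall S', spanning_tree Vs eu ev Es S' ->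
    (\sum_(e in S) w e <= \sum_(e in S') w e)%R.

Definition ccut (V E : finType) (eu ev : E -> V) (S : {set V}) : {set E} :=
  [set e | (eu e \in S) != (ev e \in S)].

Definition comp_of (V E : finType) (eu ev : E -> V) (S : {set E}) (x : V)
  : {set V} := [set y | connect (gadj eu ev S) x y].

Definition kmax (C : finType) (k : C -> nat) (S : {set C}) : nat :=
  \max_(A in S) k A.

Definition chooseX (C : finType) (k : C -> nat) (L R : nat -> {set C})
  (i : nat) : {set C} :=
  if kmax k (L i) <= kmax k (R i) then L i else R i.

Fixpoint counter (C : finType) (L R : nat -> {set C}) (n : nat) : C -> nat :=
  match n with
  | 0 => fun _ => 0
  | n'.+1 => let k := counter L R n' in
             fun A => k A + (A \in chooseX k L R n')
  end.

(* X_i (0-based index i) *)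
Definition Xset (C : finType) (L R : nat -> {set C}) (i : nat) : {set C} :=
  chooseX (counter L R i) L R i.

From mathcomp Require Import all_boot all_order all_algebra.
Set Implicit Arguments. Unset Strict Implicit. Unset Printing Implicit Defensive.
Import Order.TTheory GRing.Theory Num.Theory.

(* Only one property of the X_i is used (neither the weight order nor the
   counter rule matters): X_i is a component, containing exactly one endpoint
   of e'_i, of the forest formed by e'_1, ..., e'_(i-1).  So C(X_i) separates
   the endpoints of e'_i, while for j > i both endpoints of e'_i lie on the
   same side of C(X_j).  Let D be the set of edges of F and T crossing some
   C(X_i), i in A, and take a rational combination of the indicators of the
   X_i (i in A) whose potential is constant along the edges of D.  It is also
   constant along the other edges of T (those outside F join vertices of one
   component of T \ F, the others cross no C(X_i)), hence constant on V since
   T is connected; at the endpoints of e'_i, for the least i with a nonzero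
   coefficient, this forces that coefficient to vanish.  Thus the |A| cut
   vectors restricted to D are linearly independent, and |A| <= |D|. *)

Section GraphFacts.
Variables (W E : finType) (eu ev : E -> W).

Lemma gadj_sym (S : {set E}) : symmetric (gadj eu ev S).
Proof.
by move=> x y; apply/existsP/existsP => -[e He]; exists e; rewrite orbC.
Qed.

Lemma connect_gadj_sym (S : {set E}) : connect_sym (gadj eu ev S).
Proof. exact/sym_connect_sym/gadj_sym. Qed.

Lemma connect_gadjS (S S' : {set E}) x y : S \subset S' ->
  connect (gadj eu ev S) x y -> connect (gadj eu ev S') x y.
Proof.
move=> sSS'; apply: connect_sub => {}x {}y /existsP[e /andP[eS xy]].
by apply/connect1/existsP; exists e; rewrite (subsetP sSS').
Qed.

Lemma connect_gadj_eq (S : {set E}) (K : Type) (f : W -> K) :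
  {in S, forall e, f (eu e) = f (ev e)} ->
  forall x y, connect (gadj eu ev S) x y -> f x = f y.
Proof.
move=> fS x y /connectP[p + ->].
elim: p x => //= z p IH x /andP[/existsP[e] + /IH <-].
by case/andP=> eS /orP[]/andP[/eqP<- /eqP<-]; rewrite fS.
Qed.

Lemma bridge_ends_disconnected (Vs : {set W}) (S : {set E}) e :
  gconnected Vs eu ev S -> ~ gconnected Vs eu ev (S :\ e) ->
  ~~ connect (gadj eu ev (S :\ e)) (eu e) (ev e).
Proof.
move=> conS notconS; apply/negP => ends; apply: notconS => x y xV yV.
move: (conS x y xV yV); apply: connect_sub => u v /existsP[f /andP[fS uv]].
have [efe | nfe] := eqVneq f e.
  rewrite efe in uv.
  by case/orP: uv => /andP[/eqP<- /eqP<-] //; rewrite connect_gadj_sym.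
by apply/connect1/existsP; exists f; rewrite !inE nfe fS.
Qed.

End GraphFacts.

Lemma connect_gadj_comp (V W E : finType) (f : V -> W) (eu ev : E -> V)
  (S : {set E}) x B :
  connect (gadj (f \o eu) (f \o ev) S) (f x) B -> exists y, B = f y.
Proof.
case/connectP=> p + ->; elim: p x => [|z p IH] x /=; first by exists x.
by case/andP=> /existsP[e /andP[_ /orP[]/andP[/eqP zu /eqP zv]]];
  rewrite -?zu -?zv; apply: IH.
Qed.

Section Components.
Variables (V E : finType) (eu ev : E -> V) (S : {set E}).

Lemma comp_of_eq x y :
  x \in comp_of eu ev S y -> comp_of eu ev S x = comp_of eu ev S y.
Proof.
rewrite inE => yx; apply/setP => z; rewrite !inE; apply/idP/idP => [|yz].
  exact: connect_trans.
by apply: connect_trans yz; rewrite connect_gadj_sym.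
Qed.

Lemma mem_bigcup_comp (X : {set {set V}}) x :
  (forall B, B \in X -> exists y, B = comp_of eu ev S y) ->
  (x \in \bigcup_(B in X) B) = (comp_of eu ev S x \in X).
Proof.
move=> Xcomp; apply/bigcupP/idP => [[B BX xB]|xX].
  by have [y defB] := Xcomp B BX; move: xB BX; rewrite defB => /comp_of_eq ->.
by exists (comp_of eu ev S x); rewrite // inE connect0.
Qed.

End Components.

Section TriangularCuts.
Variables (V E : finType) (eu ev : E -> V) (T D : {set E}) (n : nat).
Variables (A : {set 'I_n}) (U : 'I_n -> {set V}) (a b : 'I_n -> V).
Hypothesis T_connected : gconnected [set: V] eu ev T.
Hypothesis cuts_off_D : forall e, e \in T -> e \notin D ->
  forall i, i \in A -> (eu e \in U i) = (ev e \in U i).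
Hypothesis cut_separates : forall i, i \in A -> (a i \in U i) != (b i \in U i).
Hypothesis later_cuts_keep : forall i j, i \in A -> j \in A -> (i < j)%N ->
  (a i \in U j) = (b i \in U j).

Local Open Scope ring_scope.

Let side (r : 'I_#|A|) (x : V) : rat := (x \in U (enum_val r))%:R.
Let potential (c : 'I_#|A| -> rat) (x : V) : rat :=
  \sum_(r < #|A|) c r * side r x.

Lemma potential_eq0 (c : 'I_#|A| -> rat) :
  (forall e, e \in D -> potential c (eu e) = potential c (ev e)) ->
  forall r, c r = 0.
Proof.
move=> cD r0; apply/eqP/negPn/negP => cr0.
have [m cm0 m_min] :=
  @arg_minnP _ r0 (fun r => c r != 0) (fun r => val (enum_val r)) cr0.
have cT : {in T, forall e, potential c (eu e) = potential c (ev e)}.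
  move=> e eT; have [/cD//|eD] := boolP (e \in D); rewrite /potential.
  by apply: eq_bigr => r _; rewrite /side (cuts_off_D eT eD) ?enum_valP.
move: (connect_gadj_eq cT (T_connected (in_setT (a (enum_val m)))
  (in_setT (b (enum_val m))))).
rewrite /potential => /eqP; rewrite -subr_eq0 -sumrB (bigD1 m) //= big1 ?addr0.
  rewrite -mulrBr mulf_eq0 (negbTE cm0) /= /side.
  by move: (cut_separates (enum_valP m)); case: (_ \in _); case: (_ \in _).
move=> r rm; have [cr|/negbNE/eqP->] := boolP (c r != 0); last first.
  by rewrite !mul0r subrr.
have lt_mr : (enum_val m < enum_val r)%N.
  rewrite ltn_neqAle m_min // andbT.
  by rewrite (inj_eq val_inj) (inj_eq enum_val_inj) eq_sym.
by rewrite /side (later_cuts_keep (enum_valP m) (enum_valP r) lt_mr) subrr.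
Qed.

Lemma card_cuts_le : (#|A| <= #|D|)%N.
Proof.
pose M : 'M[rat]_(#|A|, #|D|) :=
  \matrix_(r, d) (side r (eu (enum_val d)) - side r (ev (enum_val d))).
suff /eqP <- : row_free M by exact: rank_leq_col.
apply/inj_row_free => v vM0; apply/rowP => r0; rewrite mxE.
apply: (@potential_eq0 (fun r => v 0 r)) => e eD.
apply/eqP; rewrite -subr_eq0 -sumrB; apply/eqP.
have := congr1 (fun N : 'rV_#|D| => N 0 (enum_rank_in eD e)) vM0.
rewrite !mxE => vMe; rewrite -[RHS]vMe; apply: eq_bigr => r _.
by rewrite mxE enum_rankK_in // mulrBr.
Qed.

End TriangularCuts.

Section ForestCuts.
Variables (V E : finType) (eu ev : E -> V) (T F Tcc : {set E}) (m : nat).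
Variables (ep : 'I_m -> E) (L Rt : nat -> {set {set V}}).

Let cc := comp_of eu ev (T :\: F).
Let forest (i : 'I_m) :=
  gadj (cc \o eu) (cc \o ev) [set ep j | j : 'I_m & (j < i)%N].
Let U (i : 'I_m) := \bigcup_(B in Xset L Rt i) B.

Hypothesis T_connected : gconnected [set: V] eu ev T.
Hypothesis Tcc_connected :
  gconnected [set cc x | x : V] (cc \o eu) (cc \o ev) Tcc.
Hypothesis Tcc_minimal : forall e, e \in Tcc ->
  ~ gconnected [set cc x | x : V] (cc \o eu) (cc \o ev) (Tcc :\ e).
Hypothesis ep_inj : injective ep.
Hypothesis ep_Tcc : [set ep i | i : 'I_m] = Tcc.
Hypothesis LR_sides : forall i : 'I_m,
  let Ku := [set B | connect (forest i) (cc (eu (ep i))) B] in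
  let Kv := [set B | connect (forest i) (cc (ev (ep i))) B] in
  (L i = Ku /\ Rt i = Kv) \/ (L i = Kv /\ Rt i = Ku).

Lemma forest_ends_disconnected (i : 'I_m) :
  ~~ connect (forest i) (cc (eu (ep i))) (cc (ev (ep i))).
Proof.
have epi_Tcc : ep i \in Tcc by rewrite -ep_Tcc imset_f.
apply: contraNN (bridge_ends_disconnected Tcc_connected (Tcc_minimal epi_Tcc)).
apply: connect_gadjS; apply/subsetP => _ /imsetP[j + ->]; rewrite inE => ji.
rewrite !inE -ep_Tcc imset_f // andbT.
by apply: contraTneq ji => /ep_inj ->; rewrite ltnn.
Qed.

Lemma Xset_component (i : 'I_m) :
  exists2 s, s \in [:: eu (ep i); ev (ep i)] &
    Xset L Rt i = [set B | connect (forest i) (cc s) B].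
Proof.
rewrite /Xset /chooseX; case: ifP => _; case: (LR_sides i) => -[LE RE];
  rewrite ?LE ?RE;
  by [exists (eu (ep i)); rewrite ?inE ?eqxx
     | exists (ev (ep i)); rewrite ?inE ?eqxx ?orbT].
Qed.

Lemma mem_Xset_side (i : 'I_m) x : (x \in U i) = (cc x \in Xset L Rt i).
Proof.
apply: mem_bigcup_comp => B; have [s _ ->] := Xset_component i.
rewrite inE; exact: connect_gadj_comp.
Qed.

Lemma Xset_separates (i : 'I_m) : (eu (ep i) \in U i) != (ev (ep i) \in U i).
Proof.
have disc := forest_ends_disconnected i.
rewrite !mem_Xset_side; have [s] := Xset_component i.
rewrite !inE => /orP[]/eqP-> ->; rewrite !inE connect0 ?(negbTE disc) //.
by rewrite connect_gadj_sym (negbTE disc).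
Qed.

Lemma Xset_later (i j : 'I_m) :
  (i < j)%N -> (eu (ep i) \in U j) = (ev (ep i) \in U j).
Proof.
move=> ij; rewrite !mem_Xset_side; have [s _ ->] := Xset_component j.
rewrite !inE.
have adj : forest j (cc (eu (ep i))) (cc (ev (ep i))).
  by apply/existsP; exists (ep i); rewrite imset_f ?inE ?eqxx.
exact: (same_connect1r (connect_gadj_sym _ _ _) adj).
Qed.

Lemma Xset_uncut_off_F (i : 'I_m) e : e \in T -> e \notin F ->
  (eu e \in U i) = (ev e \in U i).
Proof.
move=> eT eNF; rewrite !mem_Xset_side /cc (comp_of_eq (x := eu e) (y := ev e)) //.
rewrite inE; apply: connect1; apply/existsP; exists e.
by rewrite !inE eNF eT !eqxx orbT.
Qed.

Lemma card_cut_crossing_edges (A : {set 'I_m}) :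
  (#|A| <= #|[set e in F :&: T | [exists i in A, e \in ccut eu ev (U i)]]|)%N.
Proof.
apply: (card_cuts_le (a := eu \o ep) (b := ev \o ep) T_connected)
  => [e eT eD i iA|i _|i j _ _].
- have [eF|eNF] := boolP (e \in F); last exact: Xset_uncut_off_F.
  apply/eqP; apply: contraNT eD => cut.
  by rewrite !inE eF eT; apply/existsP; exists i; rewrite iA inE.
- exact: Xset_separates.
- exact: Xset_later.
Qed.

End ForestCuts.

Theorem mainTheorem12
  (R : realFieldType) (V E : finType) (eu ev : E -> V) (w : E -> R)
  (F T Tcc : {set E}) (t : nat)
  (ep : 'I_t.-1 -> E) (L Rt : nat -> {set {set V}}) :
  (forall e, 0 <= w e)%R ->
  gconnected [set: V] eu ev [set: E] ->
  gconnected [set: V] eu ev (~: F) ->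
  is_mst [set: V] eu ev [set: E] w T ->
  (2 <= t)%N ->
  #|T :&: F| = t.-1 ->
  (* G'_cc: vertices = components of (V, T \ F), edges = E \ F *)
  let cc := comp_of eu ev (T :\: F) in
  let Vcc := [set cc x | x : V] in
  is_mst Vcc (cc \o eu) (cc \o ev) (~: F) w Tcc ->
  (* e'_1, ..., e'_{t-1}: an enumeration of T'_cc by nondecreasing weight *)
  injective ep ->
  [set ep i | i : 'I_t.-1] = Tcc ->
  (forall i j : 'I_t.-1, (i <= j)%N -> (w (ep i) <= w (ep j))%R) ->
  (* L_i, R_i: the two components, in the forest with edges e'_1..e'_{i-1},
     joined by e'_i *)
  (forall i : 'I_t.-1,
     let Fi := [set ep j | j : 'I_t.-1 & (j < i)%N] in
     let Ku := [set B | connect (gadj (cc \o eu) (cc \o ev) Fi) (cc (eu (ep i))) B] in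
     let Kv := [set B | connect (gadj (cc \o eu) (cc \o ev) Fi) (cc (ev (ep i))) B] in
     (L i = Ku /\ Rt i = Kv) \/ (L i = Kv /\ Rt i = Ku)) ->
  forall k : nat, (1 <= k <= t.-1)%N ->
  forall A : {set 'I_t.-1}, #|A| = k ->
  (k <= #|[set e in F :&: T |
            [exists i in A, e \in ccut eu ev (\bigcup_(B in Xset L Rt i) B)]]|)%N.
Proof.
move=> _ _ _ [[_ T_connected _] _] _ _ cc Vcc [[_ Tcc_connected Tcc_minimal] _].
move=> ep_inj ep_Tcc _ LR_sides k _ A <-.
exact: card_cut_crossing_edges T_connected Tcc_connected Tcc_minimal ep_inj ep_Tcc
  LR_sides A.
Qed.
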